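(* Let $\|\cdot\|$ be a $C^2$ and strictly convex norm on $\mathbb{R}^2$, let $\alpha_0\in(0,\pi/2]$ be defined by $\sin(\alpha_0)=\inf_{x\in\partial B_{\|\cdot\|}(0,1)}\langle\nu_x,x/|x|\rangle$, and let $\gamma:I\to\mathbb{R}^2$ be a $\|\cdot\|$-self-contracted curve on an interval $I\subset\mathbb{R}$. Then for all $s\leq t\leq u$ in $I$, setting $x_0=\gamma(s)$, $y=\gamma(t)$, $y'=\gamma(u)$, and assuming $y\neq x_0$ and $y'\neq x_0$, $$\Big\langle\frac{y-x_0}{|y-x_0|},\frac{y'-x_0}{|y'-x_0|}\Big\rangle\geq-\cos(\alpha_0).$$
   Context: $\langle\cdot,\cdot\rangle$ and $|\cdot|$ are the Euclidean inner product and norm on $\mathbb{R}^2$. The norm $\|\cdot\|$ is $C^2$ on $\mathbb{R}^2\setminus\{0\}$ and its unit sphere $\partial B_{\|\cdot\|}(0,1)=\{\|x\|=1\}$ is a $C^2$ curve of strictly positive curvature. For $x$ on the unit sphere, $\nu_x$ is the outer Euclidean unit normal to the unit sphere at $x$. A curve $\gamma:I\to\mathbb{R}^2$ (not necessarily continuous) is $\|\cdot\|$-self-contracted if for every $[a,b]\subset I$ the function $t\mapsto\|\gamma(t)-\gamma(b)\|$ is non-increasing on $[a,b]$. *)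

From Stdlib Require Import Reals.
From Coquelicot Require Import Coquelicot.
Open Scope R_scope.

Definition R2 := (R * R)%type.

Definition vsub (x y : R2) : R2 := (fst x - fst y, snd x - snd y).
Definition vadd (x y : R2) : R2 := (fst x + fst y, snd x + snd y).
Definition vscal (a : R) (x : R2) : R2 := (a * fst x, a * snd x).

Definition ip (x y : R2) : R := fst x * fst y + snd x * snd y.
Definition enorm (x : R2) : R := sqrt (ip x x).

Definition is_norm (N : R2 -> R) : Prop :=
  (forall x, 0 <= N x) /\
  (forall x, N x = 0 -> x = (0, 0)) /\
  (forall a x, N (vscal a x) = Rabs a * N x) /\
  (forall x y, N (vadd x y) <= N x + N y).

Definition d1 (f : R2 -> R) (p : R2) : R := Derive (fun t => f (t, snd p)) (fst p).
Definition d2 (f : R2 -> R) (p : R2) : R := Derive (fun t => f (fst p, t)) (snd p).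

Definition C2_off0 (f : R2 -> R) : Prop :=
  forall p : R2, p <> (0, 0) ->
    ex_derive (fun t => f (t, snd p)) (fst p) /\
    ex_derive (fun t => f (fst p, t)) (snd p) /\
    ex_derive (fun t => d1 f (t, snd p)) (fst p) /\
    ex_derive (fun t => d1 f (fst p, t)) (snd p) /\
    ex_derive (fun t => d2 f (t, snd p)) (fst p) /\
    ex_derive (fun t => d2 f (fst p, t)) (snd p) /\
    continuous f p /\ continuous (d1 f) p /\ continuous (d2 f) p /\
    continuous (d1 (d1 f)) p /\ continuous (d2 (d1 f)) p /\
    continuous (d1 (d2 f)) p /\ continuous (d2 (d2 f)) p.

Definition grad (f : R2 -> R) (p : R2) : R2 := (d1 f p, d2 f p).

Definition nu (N : R2 -> R) (x : R2) : R2 := vscal (/ enorm (grad N x)) (grad N x).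

(* curvature (w.r.t. the outer normal) of the level curve {N = 1} at x,
   standard formula for the curvature of an implicitly defined curve *)
Definition curv (N : R2 -> R) (x : R2) : R :=
  (d1 (d1 N) x * (d2 N x) ^ 2 - 2 * d2 (d1 N) x * d1 N x * d2 N x
   + d2 (d2 N) x * (d1 N x) ^ 2) / (enorm (grad N x)) ^ 3.

Definition sphere_pos_curv (N : R2 -> R) : Prop :=
  forall x, N x = 1 -> grad N x <> (0, 0) /\ 0 < curv N x.

Definition strictly_convex_norm (N : R2 -> R) : Prop :=
  forall x y, N x = 1 -> N y = 1 -> x <> y -> N (vscal (/2) (vadd x y)) < 1.

Definition is_inf (S : R -> Prop) (m : R) : Prop :=
  (forall s, S s -> m <= s) /\ (forall m', (forall s, S s -> m' <= s) -> m' <= m).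

Definition is_interval (I : R -> Prop) : Prop :=
  forall a b c, I a -> I c -> a <= b -> b <= c -> I b.

(* gamma is N-self-contracted on I (gamma need not be continuous) *)
Definition self_contracted (N : R2 -> R) (I : R -> Prop) (gamma : R -> R2) : Prop :=
  forall a b, I a -> I b -> a <= b ->
    forall t1 t2, a <= t1 -> t1 <= t2 -> t2 <= b ->
      N (vsub (gamma t2) (gamma b)) <= N (vsub (gamma t1) (gamma b)).

(** Put [a = gamma s], [b = gamma t], [c = gamma u] and [r = N (a - c)].
    Self-contraction gives [N (b - c) <= r], so [p = (a - c) / r] lies on the
    unit sphere and [(b - c) / r] in the unit ball.  Since the ball is convex,
    the gradient of [N] at [p] is an outer normal to it, hence
    [<nu_p, b - a> <= 0]; and the definition of [alpha0] says
    [<nu_p, (c - a) / |c - a|> <= - sin alpha0].  Two unit vectors of the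
    plane lying on these two sides of the unit normal [nu_p] make an angle of
    at most [PI - alpha0]. *)

From Pilot Require Import Defs.
From Stdlib Require Import Reals Lra Psatz.
From Coquelicot Require Import Coquelicot.
Open Scope R_scope.

Lemma ip_scal_l k x y : ip (vscal k x) y = k * ip x y.
Proof. destruct x, y; unfold ip, vscal; simpl; ring. Qed.

Lemma ip_scal_r k x y : ip x (vscal k y) = k * ip x y.
Proof. destruct x, y; unfold ip, vscal; simpl; ring. Qed.

Lemma ip_self_pos (v : R2) : v <> (0, 0) -> 0 < ip v v.
Proof.
  destruct v as [x y]; unfold ip; simpl; intro Hv.
  destruct (Req_dec x 0) as [->|Hx]; [destruct (Req_dec y 0) as [->|Hy]|].
  - now contradiction Hv.
  - nra.
  - nra.
Qed.

Lemma enorm_pos (v : R2) : v <> (0, 0) -> 0 < enorm v.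
Proof. intro Hv; apply sqrt_lt_R0, ip_self_pos, Hv. Qed.

Lemma enorm_scal k v : 0 < k -> enorm (vscal k v) = k * enorm v.
Proof.
  intro Hk; unfold enorm; rewrite ip_scal_l, ip_scal_r, <- Rmult_assoc.
  rewrite sqrt_mult by (destruct v; unfold ip; simpl; nra).
  now rewrite sqrt_square by lra.
Qed.

Lemma enorm_vsub_sym x y : enorm (vsub x y) = enorm (vsub y x).
Proof. destruct x, y; unfold enorm, ip, vsub; simpl; f_equal; ring. Qed.

Lemma ip_normalize_self (v : R2) : v <> (0, 0) ->
  ip (vscal (/ enorm v) v) (vscal (/ enorm v) v) = 1.
Proof.
  intro Hv; rewrite ip_scal_l, ip_scal_r, <- Rmult_assoc, <- Rinv_mult.
  assert (Hsq : enorm v * enorm v = ip v v)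
    by (apply sqrt_sqrt; left; apply ip_self_pos, Hv).
  rewrite Hsq; apply Rinv_l, Rgt_not_eq, ip_self_pos, Hv.
Qed.

Lemma vsub_neq0 x y : x <> y -> vsub x y <> (0, 0).
Proof.
  destruct x as [x1 x2], y as [y1 y2]; unfold vsub; simpl; intros Hxy E.
  injection E; intros; apply Hxy; f_equal; lra.
Qed.

Definition perp (n : R2) : R2 := (- snd n, fst n).

Lemma ip_decomp_orthonormal n e d : ip n n = 1 ->
  ip e d = ip n e * ip n d + ip (perp n) e * ip (perp n) d.
Proof.
  destruct n as [n1 n2], e, d; unfold ip, perp; simpl; intro Hn.
  rewrite <- (Rmult_1_l (_ + _)) at 1; rewrite <- Hn; ring.
Qed.

Lemma ip_unit_ge_neg_cos (n e d : R2) (s c : R) :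
  ip n n = 1 -> ip e e = 1 -> ip d d = 1 ->
  ip n e <= 0 -> ip n d <= - s -> 0 <= s -> 0 <= c -> s * s + c * c = 1 ->
  ip e d >= - c.
Proof.
  intros Hn He Hd Hne Hnd Hs Hc Hsc.
  rewrite (ip_decomp_orthonormal n e d Hn).
  assert (Hpe := ip_decomp_orthonormal n e e Hn).
  assert (Hpd := ip_decomp_orthonormal n d d Hn).
  set (e1 := ip n e) in *; set (e2 := ip (perp n) e) in *.
  set (d1 := ip n d) in *; set (d2 := ip (perp n) d) in *.
  assert (He1d1 : 0 <= e1 * d1) by nra.
  assert (He2 : e2 * e2 <= 1) by nra.
  assert (Hd1 : s * s <= d1 * d1) by nra.
  assert (Hd2 : d2 * d2 <= c * c) by nra.
  assert (Hed2 : (e2 * d2) * (e2 * d2) <= c * c) by nra.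
  assert (e2 * d2 >= - c) by nra.
  lra.
Qed.

Lemma derivable_pt_lim_nonpos_of_max_right (phi : R -> R) (l : R) :
  derivable_pt_lim phi 0 l ->
  (forall t, 0 < t <= 1 -> phi t <= phi 0) -> l <= 0.
Proof.
  intros Hd Hmax; apply Rnot_lt_le; intro Hl.
  destruct (Hd (l / 2) ltac:(lra)) as [[del Hdel] Hlim]; simpl in Hlim.
  set (t := Rmin (del / 2) 1).
  assert (Ht : 0 < t <= 1)
    by (split; [apply Rmin_pos; lra | apply Rmin_r]).
  assert (Htd : t <= del / 2) by apply Rmin_l.
  specialize (Hlim t ltac:(lra) ltac:(rewrite Rabs_right; lra)).
  rewrite Rplus_0_l in Hlim; apply Rabs_def2 in Hlim.
  assert (Hq : (phi t - phi 0) / t <= 0).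
  { apply Rmult_le_0_r; [specialize (Hmax t Ht); lra |].
    left; apply Rinv_0_lt_compat; lra. }
  lra.
Qed.

Lemma locally_2d_neq0 (x y : R) : (x, y) <> (0, 0) ->
  locally_2d (fun u v => (u, v) <> (0, 0)) x y.
Proof.
  intro Hxy; destruct (Req_dec x 0) as [->|Hx].
  - assert (Hy : y <> 0) by (intros ->; now apply Hxy).
    exists (mkposreal _ (Rabs_pos_lt y Hy)); simpl; intros u v _ Hv E.
    injection E; intros -> ->; rewrite Rminus_0_l, Rabs_Ropp in Hv; lra.
  - exists (mkposreal _ (Rabs_pos_lt x Hx)); simpl; intros u v Hu _ E.
    injection E; intros -> ->; rewrite Rminus_0_l, Rabs_Ropp in Hu; lra.
Qed.

(** Continuity of the first partial derivative near [(x, y)] makes [N]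
    (Fréchet) differentiable there. *)
Lemma C2_off0_differentiable (N : R2 -> R) (x y : R) :
  C2_off0 N -> (x, y) <> (0, 0) ->
  differentiable_pt_lim (fun u v => N (u, v)) x y (Defs.d1 N (x, y)) (Defs.d2 N (x, y)).
Proof.
  intros hC2 Hxy; apply filterdiff_differentiable_pt_lim.
  eapply filterdiff_ext_lin;
    [apply (is_derive_filterdiff (fun u v => N (u, v)) x y (fun u v => Defs.d1 N (u, v))) |].
  - apply (locally_2d_locally
             (fun u v => is_derive (fun z => N (z, v)) u (Defs.d1 N (u, v)))).
    apply (locally_2d_impl (fun u v => (u, v) <> (0, 0))); [| exact (locally_2d_neq0 x y Hxy)].
    apply locally_2d_forall; intros u v Huv.
    exact (Derive_correct _ _ (proj1 (hC2 (u, v) Huv))).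
  - exact (Derive_correct _ _ (proj1 (proj2 (hC2 (x, y) Hxy)))).
  - destruct (hC2 (x, y) Hxy) as (_ & _ & _ & _ & _ & _ & _ & Hc1 & _).
    eapply continuous_ext; [| exact Hc1]; now intros [].
  - now intros [].
Qed.

(** Along the segment from [p] to [q], [N] stays [<= 1 = N p] by convexity,
    so its derivative at [p] in the direction [q - p] is nonpositive. *)
Lemma grad_norm_supports_ball (N : R2 -> R) (p q : R2) :
  is_norm N -> C2_off0 N -> p <> (0, 0) -> N p = 1 -> N q <= 1 ->
  ip (grad N p) (vsub q p) <= 0.
Proof.
  intros (_ & _ & Hhom & Htri) hC2 Hp HNp HNq.
  destruct p as [x y], q as [x' y']; unfold ip, grad, vsub; simpl.
  apply (derivable_pt_lim_nonpos_of_max_right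
           (fun t => N (x + t * (x' - x), y + t * (y' - y)))).
  - apply (derivable_pt_lim_comp_2d (fun u v => N (u, v))).
    + rewrite !Rmult_0_l, !Rplus_0_r; now apply C2_off0_differentiable.
    + apply is_derive_Reals; auto_derive; [exact I | ring].
    + apply is_derive_Reals; auto_derive; [exact I | ring].
  - intros t Ht; rewrite !Rmult_0_l, !Rplus_0_r, HNp.
    replace (x + t * (x' - x), y + t * (y' - y))
      with (vadd (vscal (1 - t) (x, y)) (vscal t (x', y')))
      by (unfold vadd, vscal; simpl; f_equal; ring).
    eapply Rle_trans; [apply Htri |].
    rewrite !Hhom, HNp, !Rabs_right by lra; nra.
Qed.

Section Chord.

Variable N : R2 -> R.
Hypothesis hN : is_norm N.
Variables a b c : R2.
Hypothesis Hca : c <> a.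
Hypothesis Hcontr : N (vsub b c) <= N (vsub a c).

Let r := N (vsub a c).
Let p := vscal (/ r) (vsub a c).

Lemma chord_scale_pos : 0 < r.
Proof.
  destruct hN as (Hpos & Hdef & _); destruct (Hpos (vsub a c)) as [H|H]; [exact H |].
  exfalso; apply (vsub_neq0 a c); [congruence | now apply Hdef].
Qed.

Lemma chord_point_unit : N p = 1.
Proof.
  destruct hN as (_ & _ & Hhom & _); pose proof chord_scale_pos.
  unfold p; rewrite Hhom, Rabs_right by (left; apply Rinv_0_lt_compat; lra).
  now apply Rinv_l, Rgt_not_eq.
Qed.

Lemma chord_point_neq0 : p <> (0, 0).
Proof.
  intro E; pose proof chord_point_unit as H1; rewrite E in H1.
  destruct hN as (_ & _ & Hhom & _).
  replace (0, 0) with (vscal 0 (0, 0)) in H1 by (unfold vscal; f_equal; simpl; ring).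
  rewrite Hhom, Rabs_R0 in H1; lra.
Qed.

Lemma chord_grad_ip_nonpos : C2_off0 N -> ip (grad N p) (vsub b a) <= 0.
Proof.
  intro hC2; pose proof chord_scale_pos as Hr.
  set (q := vscal (/ r) (vsub b c)).
  assert (HNq : N q <= 1).
  { destruct hN as (_ & _ & Hhom & _).
    unfold q; rewrite Hhom, Rabs_right by (left; apply Rinv_0_lt_compat; lra).
    apply (Rmult_le_reg_l r); [lra |].
    rewrite <- Rmult_assoc, Rinv_r, Rmult_1_l, Rmult_1_r by lra; exact Hcontr. }
  assert (Hsup := grad_norm_supports_ball N p q hN hC2
                    chord_point_neq0 chord_point_unit HNq).
  replace (ip (grad N p) (vsub b a)) with (r * ip (grad N p) (vsub q p))
    by (unfold q, p, ip, vsub, vscal; simpl; field; lra).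
  nra.
Qed.

Lemma chord_point_direction :
  vscal (/ enorm p) p = vscal (-1) (vscal (/ enorm (vsub c a)) (vsub c a)).
Proof.
  pose proof chord_scale_pos as Hr.
  assert (Hn := enorm_pos _ (vsub_neq0 c a Hca)).
  unfold p; rewrite enorm_scal, (enorm_vsub_sym a c)
    by (apply Rinv_0_lt_compat; lra).
  unfold vscal, vsub in *; simpl; f_equal; field; split; lra.
Qed.

End Chord.

Theorem lemma3p1 (N : R2 -> R) (alpha0 : R) (I : R -> Prop) (gamma : R -> R2)
  (hN : is_norm N) (hC2 : C2_off0 N) (hcurv : sphere_pos_curv N)
  (hconv : strictly_convex_norm N)
  (ha0 : 0 < alpha0 <= PI / 2)
  (hsin : is_inf (fun v => exists x, N x = 1 /\ v = ip (nu N x) (vscal (/ enorm x) x))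
                 (sin alpha0))
  (hI : is_interval I) (hgamma : self_contracted N I gamma) :
  forall s t u, I s -> I t -> I u -> s <= t -> t <= u ->
    gamma t <> gamma s -> gamma u <> gamma s ->
    ip (vscal (/ enorm (vsub (gamma t) (gamma s))) (vsub (gamma t) (gamma s)))
       (vscal (/ enorm (vsub (gamma u) (gamma s))) (vsub (gamma u) (gamma s)))
    >= - cos alpha0.
Proof.
  intros s t u Is It Iu Hst Htu Hts Hus.
  assert (Hcontr := hgamma s u Is Iu (Rle_trans _ _ _ Hst Htu) s t
                      (Rle_refl s) Hst Htu).
  set (a := gamma s) in *; set (b := gamma t) in *; set (c := gamma u) in *.
  set (p := vscal (/ N (vsub a c)) (vsub a c)).
  assert (HNp : N p = 1) by exact (chord_point_unit N hN a c Hus).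
  assert (Hg : grad N p <> (0, 0)) by exact (proj1 (hcurv p HNp)).
  apply (ip_unit_ge_neg_cos (nu N p) _ _ (sin alpha0)).
  - exact (ip_normalize_self _ Hg).
  - exact (ip_normalize_self _ (vsub_neq0 _ _ Hts)).
  - exact (ip_normalize_self _ (vsub_neq0 _ _ Hus)).
  - unfold nu; rewrite ip_scal_l, ip_scal_r.
    assert (Hgb := chord_grad_ip_nonpos N hN a b c Hus Hcontr hC2).
    assert (0 < / enorm (grad N p)) by apply Rinv_0_lt_compat, enorm_pos, Hg.
    assert (0 < / enorm (vsub b a)) by apply Rinv_0_lt_compat, enorm_pos, vsub_neq0, Hts.
    apply Rmult_le_0_l; [lra | apply Rmult_le_0_l; [lra | exact Hgb]].
  - assert (Hinf := proj1 hsin _ (ex_intro _ p (conj HNp eq_refl))).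
    unfold p in Hinf at 2 3; rewrite (chord_point_direction N hN a c Hus), ip_scal_r in Hinf; lra.
  - apply sin_ge_0; lra.
  - apply cos_ge_0; pose proof PI_RGT_0; lra.
  - pose proof (sin2_cos2 alpha0) as H; exact H.
Qed.
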